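(* Let $\mathfrak g$ be an almost abelian Lie algebra of real dimension $2n$ with a Hermitian structure $(J,g)$. Then there exists a unitary coframe $\varphi_1,\dots,\varphi_n$ of $(1,0)$-forms, a real number $\lambda$, a vector $v=(v_2,\dots,v_n)^t\in\mathbb C^{n-1}$ and a matrix $A=(A_{ij})_{2\le i,j\le n}\in M_{n-1}(\mathbb C)$ such that $$d\varphi_1=-\lambda\,\varphi_1\wedge\bar\varphi_1,\qquad d\varphi_i=-\bar v_i\,\varphi_1\wedge\bar\varphi_1+\sum_{j=2}^n\overline{A_{ij}}\,(\varphi_1+\bar\varphi_1)\wedge\varphi_j,\quad 2\le i\le n.$$
   Context: A Hermitian structure on a real Lie algebra $\mathfrak g$ is an integrable almost complex structure $J$ (i.e. $[x,y]-[Jx,Jy]+J[Jx,y]+J[x,Jy]=0$) together with a $J$-invariant inner product $g$. $\mathfrak g^{1,0}=\{x-\sqrt{-1}Jx\}$; $g$ is extended complex-bilinearly; a unitary coframe is the dual of a basis $e_1,\dots,e_n$ of $\mathfrak g^{1,0}$ with $g(e_i,\bar e_j)=\delta_{ij}$. $d$ is the Chevalley–Eilenberg differential ($d\alpha(x,y)=-\alpha([x,y])$). $\mathfrak g$ is almost abelian if it is non-abelian and contains an abelian ideal of codimension one. *)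

From HB Require Import structures.
From mathcomp Require Import all_boot all_order all_algebra.
From mathcomp Require Import reals.
From mathcomp Require Import complex.
Set Implicit Arguments. Unset Strict Implicit. Unset Printing Implicit Defensive.
Import Order.TTheory GRing.Theory Num.Theory.
Local Open Scope ring_scope.
Local Open Scope complex_scope.

(* A real Lie algebra of dimension d is modelled (after choosing a basis) on
   the real vector space 'rV[R]_d with a bracket [br]. *)
Section Defs.
Variable R : realType.
Variable d : nat.
Local Notation V := 'rV[R]_d.
Local Notation C := R[i].

Definition is_lie_bracket (br : V -> V -> V) : Prop :=
  [/\ (forall (a : R) (x y z : V), br (a *: x + y) z = a *: br x z + br y z),
      (forall x y : V, br x y = - br y x) &
      (forall x y z : V, br x (br y z) + br y (br z x) + br z (br x y) = 0)].

(* almost abelian: non-abelian, with an abelian ideal of codimension one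
   (the ideal is the row space of the matrix H). *)
Definition almost_abelian (br : V -> V -> V) : Prop :=
  (exists x y : V, br x y != 0) /\
  exists H : 'M[R]_d,
    [/\ \rank H = (d - 1)%N,
        (forall x y : V, (x <= H)%MS -> (br x y <= H)%MS) &
        (forall x y : V, (x <= H)%MS -> (y <= H)%MS -> br x y = 0)].

Definition integrable_acs (br : V -> V -> V) (J : 'M[R]_d) : Prop :=
  J *m J = - 1%:M /\
  forall x y : V,
    br x y - br (x *m J) (y *m J) + br (x *m J) y *m J + br x (y *m J) *m J = 0.

Definition ip (G : 'M[R]_d) (x y : V) : R := (x *m G *m y^T) 0 0.

Definition hermitian_structure (br : V -> V -> V) (J : 'M[R]_d) (G : 'M[R]_d)
  : Prop :=
  [/\ integrable_acs br J,
      G^T = G,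
      (forall x : V, x != 0 -> 0 < ip G x x) &
      (forall x y : V, ip G (x *m J) (y *m J) = ip G x y)].

(* Complex-valued (real-linear) 1-forms on g, i.e. complex 1-forms on g_C,
   given by their values phi k 0 on the standard basis vectors. *)
Definition evf (phi : 'cV[C]_d) (x : V) : C := \sum_k (x 0 k)%:C * phi k 0.

Definition conjf (phi : 'cV[C]_d) : 'cV[C]_d := map_mx (@conjc R) phi.

(* (1,0)-form: vanishes on g^{0,1} = {x + i Jx}, i.e. phi(Jx) = i phi(x) *)
Definition is10 (J : 'M[R]_d) (phi : 'cV[C]_d) : Prop :=
  forall x : V, evf phi (x *m J) = 'i * evf phi x.

(* complexified vectors a + i b, written as pairs (a,b) *)
Definition evfC (phi : 'cV[C]_d) (ab : V * V) : C :=
  evf phi ab.1 + 'i * evf phi ab.2.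

(* complex-bilinear extension of g *)
Definition ipC (G : 'M[R]_d) (u w : V * V) : C :=
  (ip G u.1 w.1 - ip G u.2 w.2) +i* (ip G u.1 w.2 + ip G u.2 w.1).

(* e = x - i Jx in g^{1,0} and its conjugate *)
Definition vec10 (J : 'M[R]_d) (x : V) : V * V := (x, - (x *m J)).
Definition vec01 (J : 'M[R]_d) (x : V) : V * V := (x, x *m J).

(* phi_1..phi_n is a unitary coframe: the dual basis of a basis e_1..e_n of
   g^{1,0} with g(e_i, conj e_j) = delta_ij (orthonormality forces the e_j to
   form a basis of the n-dimensional space g^{1,0}). *)
Definition unitary_coframe (n : nat) (J G : 'M[R]_d) (phi : 'I_n -> 'cV[C]_d)
  : Prop :=
  (forall i, is10 J (phi i)) /\
  exists X : 'I_n -> V,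
    (forall i j, ipC G (vec10 J (X i)) (vec01 J (X j)) = (i == j)%:R) /\
    (forall i j, evfC (phi i) (vec10 J (X j)) = (i == j)%:R).

Definition wedge (a b : 'cV[C]_d) (x y : V) : C :=
  evf a x * evf b y - evf a y * evf b x.

Definition dform (br : V -> V -> V) (phi : 'cV[C]_d) (x y : V) : C :=
  - evf phi (br x y).

End Defs.

(* Let H be the abelian ideal of codimension one and X_1 a vector orthogonal to H
   with g(X_1, X_1) = 1/2; then JX_1 lies in H.  Extend X_1 to a real frame
   X_1, JX_1, ..., X_n, JX_n whose complexified vectors X_j - iJX_j are unitary, and
   take phi_j = g(., X_j) + i g(., JX_j), the dual unitary coframe.  With D = ad X_1,
   every bracket is [a X_1 + p, b X_1 + q] = a Dq - b Dp for p, q in H, and since H is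
   abelian the integrability of J gives D(Jz) = J(Dz) whenever z, Jz lie in H.
   Expanding Dp in the frame thus only produces phi_1 /\ conj(phi_1), through
   D(JX_1), and (phi_1 + conj(phi_1)) /\ phi_j.  Finally phi_1(D X_j) = 0 for j >= 2,
   because both D X_j and J(D X_j) = D(JX_j) lie in H, the orthogonal of X_1. *)

From HB Require Import structures.
From mathcomp Require Import all_boot all_order all_algebra.
From mathcomp Require Import reals.
From mathcomp Require Import complex.
From mathcomp Require Import ring.
Set Implicit Arguments. Unset Strict Implicit. Unset Printing Implicit Defensive.
Import Order.TTheory GRing.Theory Num.Theory.
Local Open Scope ring_scope.
Local Open Scope complex_scope.

Section Bracket.
Variables (R : numFieldType) (V : lmodType R) (br : V -> V -> V).
Hypothesis brL : forall (a : R) (x y z : V), br (a *: x + y) z = a *: br x z + br y z.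
Hypothesis br_anti : forall x y : V, br x y = - br y x.

Lemma br0l z : br 0 z = 0.
Proof.
have := brL 1 0 0 z; rewrite scale1r addr0 scale1r -{1}[br 0 z]addr0.
by move/addrI/esym.
Qed.

Lemma brDl x y z : br (x + y) z = br x z + br y z.
Proof. by have := brL 1 x y z; rewrite !scale1r. Qed.

Lemma brZl a x z : br (a *: x) z = a *: br x z.
Proof. by rewrite -[a *: x]addr0 brL br0l addr0. Qed.

Lemma brDr x y z : br z (x + y) = br z x + br z y.
Proof. by rewrite br_anti brDl opprD -!br_anti. Qed.

Lemma brZr a x z : br z (a *: x) = a *: br z x.
Proof. by rewrite br_anti brZl -scalerN -br_anti. Qed.

Lemma br_sumr m (f : 'I_m -> V) z : br z (\sum_j f j) = \sum_j br z (f j).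
Proof.
elim/big_rec2: _ => [|j y1 y2 _ <-]; last by rewrite brDr.
by rewrite br_anti br0l oppr0.
Qed.

Lemma brxx x : br x x = 0.
Proof.
have : (2%:R : R) *: br x x = 0 by rewrite scaler_nat mulr2n {1}br_anti addNr.
by move/eqP; rewrite scaler_eq0 pnatr_eq0 => /eqP.
Qed.

Lemma br_codim1_abelian a b X p q : br p q = 0 ->
  br (a *: X + p) (b *: X + q) = a *: br X q - b *: br X p.
Proof.
move=> pq; rewrite brL !brDr !brZr brxx scaler0 add0r pq addr0.
by rewrite (br_anti p X) scalerN.
Qed.

End Bracket.

Lemma sum_ord_split0 (V : nmodType) n (i0 : 'I_n) (f : 'I_n -> V) : i0 = 0 :> nat ->
  \sum_(j < n) f j = f i0 + \sum_(j < n | (0 < j)%N) f j.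
Proof.
move=> i00; rewrite (bigD1 i0) //=; congr (_ + _); apply: eq_bigl => j.
by rewrite lt0n -val_eqE /= i00.
Qed.

Lemma exists_nonzero_left_kernel (F : fieldType) m p (M : 'M[F]_(m, p)) :
  (\rank M < m)%N -> exists2 y : 'rV_m, y != 0 & y *m M = 0.
Proof.
move=> rkM; have /rowV0Pn[y /sub_kermxP yM y0] : kermx M != 0.
  by rewrite -mxrank_eq0 mxrank_ker subn_eq0 -ltnNge.
by exists y.
Qed.

Section InnerProduct.
Variables (R : realType) (d : nat) (G : 'M[R]_d).
Local Notation V := 'rV[R]_d.
Local Notation g := (ip G).

Lemma ipDl x y z : g (x + y) z = g x z + g y z.
Proof. by rewrite /ip !mulmxDl mxE. Qed.

Lemma ipZl a x z : g (a *: x) z = a * g x z.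
Proof. by rewrite /ip -!scalemxAl mxE. Qed.

Lemma ipNl x z : g (- x) z = - g x z.
Proof. by rewrite -scaleN1r ipZl mulN1r. Qed.

Lemma ipBl x y z : g (x - y) z = g x z - g y z.
Proof. by rewrite ipDl ipNl. Qed.

Lemma ip_mx x y : x *m (G *m y^T) = (g x y)%:M.
Proof. by apply/matrixP => i j; rewrite !ord1 mulmxA [RHS]mxE eqxx mulr1n. Qed.

Lemma ip_row m1 m2 (A : 'M[R]_(m1, d)) (B : 'M[R]_(m2, d)) i j :
  (A *m G *m B^T) i j = g (row i A) (row j B).
Proof. by rewrite /ip !mxE; apply: eq_bigr => k _; rewrite -row_mul !mxE. Qed.

Hypothesis G_sym : G^T = G.

Lemma ip_sym x y : g x y = g y x.
Proof.
rewrite /ip; have -> : (x *m G *m y^T) 0 0 = (x *m G *m y^T)^T 0 0 by rewrite [RHS]mxE.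
by rewrite !trmx_mul trmxK G_sym mulmxA.
Qed.

Lemma ipZr a x z : g z (a *: x) = a * g z x.
Proof. by rewrite ip_sym ipZl (ip_sym z). Qed.

Hypothesis G_pos : forall x : V, x != 0 -> 0 < g x x.

Lemma ip_normalize (y : V) : y != 0 -> exists c : R, g (c *: y) (c *: y) = 2^-1.
Proof.
move=> y0; have yy := G_pos y0.
have s2 : Num.sqrt (2 * g y y) ^+ 2 = 2 * g y y by rewrite sqr_sqrtr // ltW ?mulr_gt0.
exists (Num.sqrt (2 * g y y))^-1; rewrite ipZl ipZr mulrA -expr2 exprVn s2.
by field; rewrite lt0r_neq0.
Qed.

Lemma orthogonal_hyperplane (H : 'M[R]_d) (y : V) : \rank H = d.-1 -> y != 0 ->
  (forall z, (z <= H)%MS -> g z y = 0) -> forall z, (z <= H)%MS <-> g z y = 0.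
Proof.
move=> rkH y0 Hy z; split=> [|zy]; first exact: Hy.
have Gy0 : G *m y^T != 0.
  apply: contraNneq (lt0r_neq0 (G_pos y0)) => Gy0.
  by rewrite -[g y y]/((y *m G *m y^T) 0 0) -mulmxA Gy0 mulmx0 mxE.
have HK : (H <= kermx (G *m y^T))%MS.
  apply/sub_kermxP/row_matrixP => i.
  by rewrite row_mul row0 ip_mx Hy ?row_sub // raddf0.
have rkK : \rank (kermx (G *m y^T)) = d.-1.
  rewrite mxrank_ker -subn1; congr (_ - _)%N; apply/eqP.
  by rewrite eqn_leq rank_leq_col lt0n mxrank_eq0.
have /andP[_ KH] : (H == kermx (G *m y^T))%MS.
  by rewrite -(mxrank_leqif_eq HK).2 rkH rkK.
by apply: submx_trans KH; apply/sub_kermxP; rewrite ip_mx zy raddf0.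
Qed.

Lemma unit_normal (H : 'M[R]_d) : (0 < d)%N -> \rank H = d.-1 ->
  exists X0 : V, g X0 X0 = 2^-1 /\ forall z, (z <= H)%MS <-> g z X0 = 0.
Proof.
move=> d0 rkH.
have [y y0 yGH] : exists2 y : V, y != 0 & y *m (G *m H^T) = 0.
  apply: exists_nonzero_left_kernel; apply: leq_ltn_trans (mxrankM_maxr _ _) _.
  by rewrite mxrank_tr rkH ltn_predL.
have Hy z : (z <= H)%MS -> g z y = 0.
  case/submxP=> w ->; rewrite ip_sym /ip trmx_mul !mulmxA -(mulmxA y) yGH.
  by rewrite !mul0mx mxE.
have [c X0X0] := ip_normalize y0.
have c0 : c != 0.
  apply: contra_eq_neq X0X0 => ->.
  by rewrite scale0r /ip !mul0mx mxE eq_sym invr_eq0 pnatr_eq0.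
exists (c *: y); split=> // z; rewrite (orthogonal_hyperplane rkH y0 Hy) ipZr.
by split=> [->|/eqP]; rewrite ?mulr0 // mulf_eq0 (negbTE c0) => /eqP.
Qed.

End InnerProduct.

Section UnitaryFrame.
Variables (R : realType) (d : nat) (J G : 'M[R]_d).
Local Notation V := 'rV[R]_d.
Local Notation g := (ip G).
Hypothesis JJ : J *m J = - 1%:M.
Hypothesis G_sym : G^T = G.
Hypothesis G_pos : forall x : V, x != 0 -> 0 < g x x.
Hypothesis G_J : forall x y : V, g (x *m J) (y *m J) = g x y.

Lemma mulmxJJ (x : V) : x *m J *m J = - x.
Proof. by rewrite -mulmxA JJ mulmxN mulmx1. Qed.

Lemma ipJl x y : g (x *m J) y = - g x (y *m J).
Proof. by rewrite -G_J mulmxJJ ipNl. Qed.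

Lemma ipJr x y : g x (y *m J) = - g (x *m J) y.
Proof. by rewrite ipJl opprK. Qed.

Lemma ip_J (x : V) : g x (x *m J) = 0.
Proof.
have : (2%:R : R) * g x (x *m J) = 0.
  by rewrite mulr2n mulrDl mul1r {1}ipJr ip_sym // addNr.
by move/eqP; rewrite mulf_eq0 pnatr_eq0 => /eqP.
Qed.

(* The complexified vectors X - iJX of a unitary frame are orthonormal for the
   Hermitian extension of g; hence the factor 1/2. *)
Definition unitary_frame (s : seq V) := forall i j, (i < size s)%N -> (j < size s)%N ->
  g s`_i s`_j = (i == j)%:R / 2 /\ g s`_i (s`_j *m J) = 0.

Lemma unitary_frame1 (X : V) : g X X = 2^-1 -> unitary_frame [:: X].
Proof. by move=> XX [|[|]] [|[|]] //= _ _; rewrite XX ip_J mul1r. Qed.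

Definition frame_mx (s : seq V) : 'M[R]_(size s + size s, d) :=
  col_mx (\matrix_(j < size s) s`_j) (\matrix_(j < size s) (s`_j *m J)).

Lemma frame_mx_gram s : unitary_frame s ->
  frame_mx s *m G *m (frame_mx s)^T = (2^-1)%:M.
Proof.
move=> fs; rewrite scalar_mx_block /frame_mx mul_col_mx tr_col_mx mul_col_row.
have fs' (i j : 'I_(size s)) := fs i j (ltn_ord i) (ltn_ord j).
congr block_mx; apply/matrixP => i j; rewrite ip_row !rowK !mxE.
- by rewrite (fs' i j).1 mulr_natl.
- by rewrite (fs' i j).2.
- by rewrite ip_sym // (fs' j i).2.
- by rewrite G_J (fs' i j).1 mulr_natl.
Qed.

Lemma unitary_frame_rcons s : unitary_frame s -> ((size s).*2 < d)%N ->
  exists x, unitary_frame (rcons s x).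
Proof.
move=> fs sd.
have [y y0 yB] : exists2 y : V, y != 0 & y *m (G *m (frame_mx s)^T) = 0.
  apply: exists_nonzero_left_kernel; apply: leq_ltn_trans (mxrankM_maxr _ _) _.
  by rewrite mxrank_tr (leq_ltn_trans (rank_leq_row _)) // addnn.
have y_frame i : g y (row i (frame_mx s)) = 0.
  by have := ip_row G y (frame_mx s) 0 i; rewrite -mulmxA yB mxE row_id.
have yX j : (j < size s)%N -> g y s`_j = 0.
  by move=> js; have := y_frame (lshift _ (Ordinal js)); rewrite rowKu rowK.
have yXJ j : (j < size s)%N -> g y (s`_j *m J) = 0.
  by move=> js; have := y_frame (rshift _ (Ordinal js)); rewrite rowKd rowK.
have [c cy] := ip_normalize G_sym G_pos y0.
exists (c *: y) => i j; rewrite size_rcons !ltnS (leq_eqVlt i) (leq_eqVlt j).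
case/orP=> [/eqP->|hi]; case/orP=> [/eqP->|hj]; rewrite !nth_rcons ?ltnn ?eqxx ?hi ?hj.
- by rewrite mul1r cy ip_J.
- by rewrite (gtn_eqF hj) mul0r !ipZl yX // yXJ // !mulr0.
- rewrite (ltn_eqF hi) mul0r -scalemxAl !ipZr // ip_sym // yX //.
  by rewrite ipJr ip_sym // yXJ // oppr0 !mulr0.
- exact: fs.
Qed.

Lemma unitary_frame_complete s k : unitary_frame s -> (size s <= k)%N -> (k.*2 <= d)%N ->
  exists t, size (s ++ t) = k /\ unitary_frame (s ++ t).
Proof.
move=> fs; elim: k => [|k IH].
  by rewrite leqn0 => /eqP s0 _; exists [::]; rewrite cats0.
rewrite leq_eqVlt => /orP[/eqP <- _|sk kd]; first by exists [::]; rewrite cats0.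
have [|t [st ft]] := IH sk; first by apply: leq_trans kd; rewrite leq_double.
have [|x fx] := unitary_frame_rcons ft; first by rewrite st (leq_trans _ kd) ?ltn_double.
by exists (rcons t x); rewrite -rcons_cat size_rcons st.
Qed.

Lemma unitary_frame_expand k s : unitary_frame s -> size s = k -> k.*2 = d -> forall x : V,
  x = \sum_(j < k) ((2 * g x s`_j) *: s`_j + (2 * g x (s`_j *m J)) *: (s`_j *m J)).
Proof.
move=> fs <- sd x; have BGB := frame_mx_gram fs.
have /submxP[w xwB] : (x <= frame_mx s)%MS.
  apply/submx_full; rewrite /row_full eqn_leq rank_leq_col /=.
  apply: (@leq_trans (size s + size s)); first by rewrite addnn sd.
  apply: (@mulmx1_min_rank _ _ _ _ _ 2%:M (G *m (frame_mx s)^T)).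
  by rewrite -!mulmxA (mulmxA (frame_mx s)) BGB -scalar_mxM mulfV ?pnatr_eq0.
have w_coord i : w 0 i = 2 * g x (row i (frame_mx s)).
  have : x *m G *m (frame_mx s)^T = 2^-1 *: w.
    by rewrite xwB -!mulmxA (mulmxA (frame_mx s)) BGB mul_mx_scalar.
  move/(congr1 (fun M : 'rV_(size s + size s) => 2 * M 0 i)).
  by rewrite ip_row row_id mxE mulrA mulfV ?pnatr_eq0 // mul1r => ->.
rewrite {1}xwB mulmx_sum_row big_split_ord /= -big_split; apply: eq_bigr => j _.
by rewrite !w_coord /frame_mx rowKu rowKd !rowK.
Qed.

End UnitaryFrame.

Section Forms.
Variables (R : realType) (d : nat).
Local Notation V := 'rV[R]_d.
Local Notation C := R[i].
Implicit Types (phi psi : 'cV[C]_d) (x y : V).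

Lemma evfDl phi psi x : evf (phi + psi) x = evf phi x + evf psi x.
Proof. by rewrite /evf -big_split; apply: eq_bigr => k _; rewrite mxE mulrDr. Qed.

Lemma evfDr phi x y : evf phi (x + y) = evf phi x + evf phi y.
Proof. by rewrite /evf -big_split; apply: eq_bigr => k _; rewrite mxE rmorphD mulrDl. Qed.

Lemma evfZr phi a x : evf phi (a *: x) = a%:C * evf phi x.
Proof. by rewrite /evf mulr_sumr; apply: eq_bigr => k _; rewrite mxE rmorphM mulrA. Qed.

Lemma evfNr phi x : evf phi (- x) = - evf phi x.
Proof. by rewrite -scaleN1r evfZr rmorphN1 mulN1r. Qed.

Lemma evfBr phi x y : evf phi (x - y) = evf phi x - evf phi y.
Proof. by rewrite evfDr evfNr. Qed.

Lemma evf_sumr phi m (f : 'I_m -> V) : evf phi (\sum_j f j) = \sum_j evf phi (f j).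
Proof.
elim/big_rec2: _ => [|j y1 y2 _ <-]; last by rewrite evfDr.
by rewrite /evf big1 // => k _; rewrite mxE rmorph0 mul0r.
Qed.

Lemma evf_conjf phi x : evf (conjf phi) x = (evf phi x)^*.
Proof.
rewrite /evf rmorph_sum; apply: eq_bigr => k _.
rewrite mxE rmorphM /=; congr (_ * _).
by apply/eqP; rewrite eq_complex /= oppr0 !eqxx.
Qed.

Variables (J G : 'M[R]_d).
Local Notation g := (ip G).

(* the (1,0)-form g(., u) + i g(., Ju), dual to u - iJu when g(u, u) = 1/2 *)
Definition form10 (u : V) : 'cV[C]_d :=
  \col_k (((G *m u^T) k 0)%:C + 'i * ((G *m (u *m J)^T) k 0)%:C).

Lemma evf_form10 u x : evf (form10 u) x = (g x u)%:C + 'i * (g x (u *m J))%:C.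
Proof.
have gE v : g x v = \sum_k x 0 k * (G *m v^T) k 0 by rewrite /ip -mulmxA mxE.
rewrite /evf !gE !rmorph_sum mulr_sumr -big_split /=; apply: eq_bigr => k _.
by rewrite mxE !rmorphM /= mulrDr mulrCA.
Qed.

Lemma conjc_form10 u x : (evf (form10 u) x)^* = (g x u)%:C - 'i * (g x (u *m J))%:C.
Proof.
rewrite evf_form10; apply/eqP; rewrite eq_complex /=.
by rewrite !mul0r !mul1r !subr0 !add0r !addr0 !eqxx.
Qed.

Lemma form10_re u x : evf (form10 u + conjf (form10 u)) x = (2 * g x u)%:C.
Proof. by rewrite evfDl evf_conjf conjc_form10 evf_form10 rmorphM rmorph_nat; ring. Qed.

Lemma wedge_form10_conj u x y : wedge (form10 u) (conjf (form10 u)) x y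
  = 'i * (2 * (g x (u *m J) * g y u - g x u * g y (u *m J)))%:C.
Proof.
rewrite /wedge !evf_conjf !conjc_form10 !evf_form10.
by rewrite !(rmorphM, rmorphB) rmorph_nat; ring.
Qed.

Hypothesis JJ : J *m J = - 1%:M.
Hypothesis G_J : forall x y : V, g (x *m J) (y *m J) = g x y.

Lemma form10_J u x : evf (form10 u) (x *m J) = 'i * evf (form10 u) x.
Proof.
rewrite !evf_form10 G_J (ipJl JJ G_J) rmorphN mulrDr mulrA -expr2 sqr_i.
by ring.
Qed.

Lemma form10_unitary_coframe n (s : seq V) : unitary_frame J G s -> size s = n ->
  unitary_coframe J G (fun j : 'I_n => form10 s`_j).
Proof.
move=> fs sn; split=> [j x|]; first exact: form10_J.
have lt_s (a : 'I_n) : (a < size s)%N by rewrite sn.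
exists (fun j => s`_j); split=> a b.
- rewrite /ipC /vec10 /vec01 /= !ipNl G_J (ipJl JJ G_J) !opprK.
  have [-> ->] := fs a b (lt_s a) (lt_s b).
  rewrite val_eqE; case: (_ == _); apply/eqP; rewrite eq_complex /=.
    by apply/andP; split; apply/eqP; field.
  by apply/andP; split; apply/eqP; field.
- rewrite /evfC /vec10 /= evfNr form10_J mulrN mulrA -expr2 sqr_i mulN1r opprK.
  rewrite evf_form10; have [-> ->] := fs b a (lt_s b) (lt_s a).
  rewrite val_eqE eq_sym; case: (_ == _); apply/eqP; rewrite eq_complex /=.
    by apply/andP; split; apply/eqP; field.
  by apply/andP; split; apply/eqP; field.
Qed.

End Forms.

Section Integrability.
Variables (R : realType) (d : nat) (br : 'rV[R]_d -> 'rV[R]_d -> 'rV[R]_d) (J : 'M[R]_d).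
Hypothesis JJ : J *m J = - 1%:M.
Hypothesis J_integrable : forall x y,
  br x y - br (x *m J) (y *m J) + br (x *m J) y *m J + br x (y *m J) *m J = 0.

Lemma br_J_commute x z : br (x *m J) (z *m J) = 0 -> br (x *m J) z = 0 ->
  br x (z *m J) = br x z *m J.
Proof.
move=> xJzJ xJz; have := J_integrable x z; rewrite xJzJ xJz mul0mx subr0 addr0.
move/(congr1 (mulmx^~ J)); rewrite mulmxDl mul0mx (mulmxJJ JJ).
by move/eqP; rewrite addr_eq0 opprK => /eqP.
Qed.

End Integrability.

Section AlmostAbelianCoframe.
Variables (R : realType) (n : nat).
Local Notation V := 'rV[R]_(n.*2).
Variables (br : V -> V -> V) (J G H : 'M[R]_(n.*2)).
Local Notation g := (ip G).
Hypothesis brL : forall (a : R) (x y z : V), br (a *: x + y) z = a *: br x z + br y z.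
Hypothesis br_anti : forall x y : V, br x y = - br y x.
Hypothesis JJ : J *m J = - 1%:M.
Hypothesis J_integrable : forall x y : V,
  br x y - br (x *m J) (y *m J) + br (x *m J) y *m J + br x (y *m J) *m J = 0.
Hypothesis G_sym : G^T = G.
Hypothesis G_J : forall x y : V, g (x *m J) (y *m J) = g x y.
Hypothesis H_ideal : forall x y : V, (x <= H)%MS -> (br x y <= H)%MS.
Hypothesis H_abelian : forall x y : V, (x <= H)%MS -> (y <= H)%MS -> br x y = 0.
Variable s : seq V.
Hypothesis s_size : size s = n.
Hypothesis s_frame : unitary_frame J G s.
Hypothesis H_perp : forall z, (z <= H)%MS <-> g z s`_0 = 0.

Local Notation X0 := s`_0.
Local Notation phi j := (form10 J G s`_j).

Definition coframe_lambda : R := - 2 * g (br X0 (X0 *m J)) (X0 *m J).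
Definition coframe_v (k : 'I_n) : R[i] := (2 * evf (phi k) (br X0 (X0 *m J)) * 'i)^*.
Definition coframe_A : 'M[R[i]]_n := \matrix_(k, j) (- 2 * evf (phi k) (br X0 s`_j))^*.

Definition hproj (x : V) : V := x - (2 * g x X0) *: X0.

Lemma normalJ_in_H : (X0 *m J <= H)%MS.
Proof. by apply/H_perp; rewrite (ipJl JJ G_J) (ip_J JJ G_sym G_J) oppr0. Qed.

Lemma frame_in_H (j : 'I_n) : (0 < j)%N -> (s`_j <= H)%MS /\ (s`_j *m J <= H)%MS.
Proof.
move=> j0; have js : (j < size s)%N by rewrite s_size.
have [sj0 sjJ0] := s_frame js (leq_ltn_trans (leq0n j) js).
split; apply/H_perp; first by rewrite sj0 (gtn_eqF j0) mul0r.
by rewrite (ipJl JJ G_J) sjJ0 oppr0.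
Qed.

Lemma ad_normal_in_H z : (z <= H)%MS -> (br X0 z <= H)%MS.
Proof. by move=> zH; rewrite br_anti -scaleN1r scalemx_sub // H_ideal. Qed.

Lemma ad_frameJ (j : 'I_n) : (0 < j)%N -> br X0 (s`_j *m J) = br X0 s`_j *m J.
Proof.
move=> j0; have [sjH sjJH] := frame_in_H j0.
by apply: (br_J_commute JJ J_integrable); apply: H_abelian; rewrite ?normalJ_in_H.
Qed.

Variable i0 : 'I_n.
Hypothesis i0_0 : i0 = 0 :> nat.

Lemma normal_norm : g X0 X0 = 2^-1.
Proof.
have s0 : (0 < size s)%N by rewrite s_size (leq_ltn_trans _ (ltn_ord i0)).
by have [-> _] := s_frame s0 s0; rewrite mul1r.
Qed.

Lemma hproj_in_H x : (hproj x <= H)%MS.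
Proof. by apply/H_perp; rewrite ipBl ipZl normal_norm; field. Qed.

Lemma br_hproj x y :
  br x y = (2 * g x X0) *: br X0 (hproj y) - (2 * g y X0) *: br X0 (hproj x).
Proof.
have {1}-> : x = (2 * g x X0) *: X0 + hproj x by rewrite addrC subrK.
have {1}-> : y = (2 * g y X0) *: X0 + hproj y by rewrite addrC subrK.
by apply: br_codim1_abelian => //; apply: H_abelian; apply: hproj_in_H.
Qed.

Lemma dform_hproj (psi : 'cV[R[i]]_(n.*2)) x y : dform br psi x y
  = (2 * g y X0)%:C * evf psi (br X0 (hproj x))
    - (2 * g x X0)%:C * evf psi (br X0 (hproj y)).
Proof. by rewrite /dform br_hproj evfBr !evfZr opprB. Qed.

Lemma hproj_normalJ x : g (hproj x) (X0 *m J) = g x (X0 *m J).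
Proof. by rewrite ipBl ipZl (ip_J JJ G_sym G_J) mulr0 subr0. Qed.

Lemma evf_hproj (j : 'I_n) x : (0 < j)%N -> evf (phi j) (hproj x) = evf (phi j) x.
Proof.
move=> j0; have js : (j < size s)%N by rewrite s_size.
have [X0j X0jJ] := s_frame (leq_ltn_trans (leq0n j) js) js.
rewrite evfBr evfZr !evf_form10 X0j X0jJ (ltn_eqF j0) mul0r rmorph0.
by rewrite mulr0 addr0 mulr0 subr0.
Qed.

Lemma evf_ad_hproj (k : 'I_n) y : evf (phi k) (br X0 (hproj y))
  = (2 * g y (X0 *m J))%:C * evf (phi k) (br X0 (X0 *m J))
    + \sum_(j < n | (0 < j)%N) 2 * evf (phi j) y * evf (phi k) (br X0 s`_j).
Proof.
rewrite {1}(unitary_frame_expand G_sym G_J s_frame s_size erefl (hproj y)).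
rewrite (br_sumr brL br_anti) evf_sumr (sum_ord_split0 _ i0_0) i0_0.
rewrite (H_perp _).1 ?hproj_in_H // hproj_normalJ mulr0 scale0r add0r.
rewrite (brZr brL br_anti) evfZr; congr (_ + _); apply: eq_bigr => j j0.
rewrite (brDr brL br_anti) !(brZr brL br_anti) (ad_frameJ j0) evfDr !evfZr.
by rewrite (form10_J JJ G_J) -(evf_hproj _ j0) [in RHS]evf_form10 !rmorphM rmorph_nat; ring.
Qed.

Lemma form0_ad_frame (j : 'I_n) : (0 < j)%N -> evf (phi i0) (br X0 s`_j) = 0.
Proof.
move=> j0; have [sjH sjJH] := frame_in_H j0.
rewrite i0_0 evf_form10 (H_perp _).1 ?ad_normal_in_H // (ipJr JJ G_J) -(ad_frameJ j0).
by rewrite (H_perp _).1 ?ad_normal_in_H // oppr0 rmorph0 mulr0 addr0.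
Qed.

Lemma form0_ad_normalJ :
  evf (phi i0) (br X0 (X0 *m J)) = 'i * (g (br X0 (X0 *m J)) (X0 *m J))%:C.
Proof.
by rewrite i0_0 evf_form10 (H_perp _).1 ?ad_normal_in_H ?normalJ_in_H // rmorph0 add0r.
Qed.

Lemma dform_coframe0 x y : dform br (phi i0) x y
  = - coframe_lambda%:C * wedge (phi i0) (conjf (phi i0)) x y.
Proof.
rewrite dform_hproj !evf_ad_hproj form0_ad_normalJ !big1 ?addr0 => [|j j0|j j0];
  rewrite ?form0_ad_frame ?mulr0 //.
rewrite i0_0 wedge_form10_conj /coframe_lambda.
by rewrite !(rmorphM, rmorphB, rmorphN) rmorph_nat; ring.
Qed.

Lemma dform_coframe (k : 'I_n) x y : (0 < k)%N -> dform br (phi k) x y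
  = - (coframe_v k)^* * wedge (phi i0) (conjf (phi i0)) x y
    + \sum_(j < n | (0 < j)%N)
        (coframe_A k j)^* * wedge (phi i0 + conjf (phi i0)) (phi j) x y.
Proof.
move=> k0; rewrite dform_hproj !evf_ad_hproj /coframe_v conjCK.
have -> : \sum_(j < n | (0 < j)%N)
    (coframe_A k j)^* * wedge (phi i0 + conjf (phi i0)) (phi j) x y
  = (2 * g y X0)%:C * \sum_(j < n | (0 < j)%N) 2 * evf (phi j) x * evf (phi k) (br X0 s`_j)
    - (2 * g x X0)%:C * \sum_(j < n | (0 < j)%N) 2 * evf (phi j) y * evf (phi k) (br X0 s`_j).
  rewrite !mulr_sumr -sumrB; apply: eq_bigr => j _.
  by rewrite mxE conjCK /wedge !form10_re i0_0; ring.
have mul_ii (a b : R[i]) : a * 'i * ('i * b) = - (a * b).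
  by rewrite -mulrA (mulrA 'i) -expr2 sqr_i mulN1r mulrN.
rewrite i0_0 wedge_form10_conj mulNr mul_ii opprK.
by rewrite !(rmorphM, rmorphB) rmorph_nat; ring.
Qed.

End AlmostAbelianCoframe.

Theorem lemma5 (R : realType) (n : nat)
  (br : 'rV[R]_(n.*2) -> 'rV[R]_(n.*2) -> 'rV[R]_(n.*2))
  (J G : 'M[R]_(n.*2)) :
  is_lie_bracket br -> almost_abelian br -> hermitian_structure br J G ->
  exists (phi : 'I_n -> 'cV[R[i]]_(n.*2)) (lambda : R)
         (v : 'I_n -> R[i]) (A : 'M[R[i]]_n),
    unitary_coframe J G phi /\
    forall i0 : 'I_n, nat_of_ord i0 = 0%N ->
      (forall x y, dform br (phi i0) x y
                   = - lambda%:C * wedge (phi i0) (conjf (phi i0)) x y) /\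
      (forall i : 'I_n, (0 < i)%N -> forall x y,
         dform br (phi i) x y
         = - (v i)^* * wedge (phi i0) (conjf (phi i0)) x y
           + \sum_(j < n | (0 < j)%N)
               (A i j)^* * wedge (phi i0 + conjf (phi i0)) (phi j) x y).
Proof.
move=> [brL br_anti _] [[x [y xy_neq0]] [H [rkH H_ideal H_abelian]]].
move=> [[JJ J_integrable] G_sym G_pos G_J].
have n_gt0 : (0 < n)%N.
  rewrite lt0n; apply/negP => /eqP n0; subst n.
  by move/eqP: xy_neq0; apply; apply: thinmx0.
have [X0 [X0X0 H_perp]] : exists X0 : 'rV_(n.*2),
    ip G X0 X0 = 2^-1 /\ forall z, (z <= H)%MS <-> ip G z X0 = 0.
  by apply: unit_normal; rewrite ?double_gt0 // -subn1.
have [t [st ft]] := unitary_frame_complete JJ G_sym G_pos G_J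
  (unitary_frame1 JJ G_sym G_J X0X0) n_gt0 (leqnn _).
rewrite cat1s in st ft.
exists (fun j => form10 J G (X0 :: t)`_j), (coframe_lambda br J G (X0 :: t)),
  (coframe_v br J G (X0 :: t)), (coframe_A br J G (X0 :: t)).
split; first by apply: (form10_unitary_coframe JJ G_J ft).
move=> i0 i0_0; split=> [x' y'|k k0 x' y'].
- exact: (dform_coframe0 brL br_anti JJ J_integrable G_sym G_J H_ideal H_abelian
    st ft H_perp i0_0).
- exact: (dform_coframe brL br_anti JJ J_integrable G_sym G_J H_abelian
    st ft H_perp i0_0 x' y' k0).
Qed.
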